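(* Let $v\in\mathcal{H}$ and let $x$ be the component of $Lv$ in $\mathcal{R}$ (with respect to $\mathcal{H}=\mathcal{R}\oplus\mathcal{N}$). Then $x\in\mathcal{H}^1=\mathcal{R}\cap H^1([0,\pi]\times\mathbb{T})$.
   Context: $\mathbb{T}=\mathbb{R}/(2\pi\mathbb{Z})$, $\mathcal{H}=L^2([0,\pi]\times\mathbb{T})$. For $m\in\mathbb{N}$, $n\in\mathbb{N}_0$, $\phi_{(m,n)}=\frac{\sqrt2}{\pi}\sin(ms)\cos(nt)$, $\psi_{(m,n)}=\frac{\sqrt2}{\pi}\sin(ms)\sin(nt)$; every $v\in\mathcal{H}$ is written $v=\sum[\alpha_{(m,n)}\phi_{(m,n)}+\beta_{(m,n)}\psi_{(m,n)}]$ with $\sum(\alpha_{(m,n)}^2+\beta_{(m,n)}^2)<\infty$. $\mathcal{R}$ (resp. $\mathcal{N}$) is the closed span of the $\phi_{(m,n)},\psi_{(m,n)}$ with $m\neq n$ (resp. $m=n$). The distinct values $m^2-n^2$ are ordered $\dots<\lambda_{-1}<\lambda_0=0<\lambda_1<\dots$. Fix a nonzero integer $k$ and $\varepsilon_1$ with $0<\varepsilon_1<\lambda_k-\lambda_{k-1}$. $L:\mathcal{H}\to\mathcal{H}$ is $Lv=\sum\left[\frac{\alpha_{(m,n)}}{m^2-n^2-\lambda_{k-1}-\varepsilon_1}\phi_{(m,n)}+\frac{\beta_{(m,n)}}{m^2-n^2-\lambda_{k-1}-\varepsilon_1}\psi_{(m,n)}\right]$. *)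

From Stdlib Require Import Reals ZArith Lia Lra.
Open Scope R_scope.

(* An element v of H = L^2([0,pi] x T) is identified with its coefficient
   families (alpha_(m,n), beta_(m,n)) w.r.t. the orthonormal basis
   phi_(m,n) = sqrt2/pi sin(ms)cos(nt), psi_(m,n) = sqrt2/pi sin(ms)sin(nt),
   m >= 1, n >= 0.  Values at m = 0 are irrelevant and never used. *)
Definition coef := nat -> nat -> R.

Definition dsum (f : nat -> nat -> R) (N : nat) : R :=
  sum_f 1 N (fun m => sum_f_R0 (fun n => f m n) N).

(* v in H : sum (alpha^2 + beta^2) < oo  (nonnegative terms: bounded partial sums). *)
Definition in_H (a b : coef) : Prop :=
  exists B : R, forall N : nat, dsum (fun m n => a m n ^ 2 + b m n ^ 2) N <= B.

Definition in_Rsp (a b : coef) : Prop :=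
  in_H a b /\ forall m : nat, (1 <= m)%nat -> a m m = 0 /\ b m m = 0.

(* H^1 membership, expressed through Fourier coefficients:
   sum (m^2 + n^2)(alpha^2 + beta^2) < oo. *)
Definition in_H1coef (a b : coef) : Prop :=
  exists B : R, forall N : nat,
    dsum (fun m n => (INR m ^ 2 + INR n ^ 2) * (a m n ^ 2 + b m n ^ 2)) N <= B.

Definition in_H1sp (a b : coef) : Prop := in_Rsp a b /\ in_H1coef a b.

(* The operator L with shift c = lambda_{k-1} + eps1, acting on one coefficient family. *)
Definition Lcoef (c : R) (a : coef) : coef :=
  fun m n => a m n / (INR m ^ 2 - INR n ^ 2 - c).

Definition projR (a : coef) : coef :=
  fun m n => if Nat.eqb m n then 0 else a m n.

Definition is_spec (z : Z) : Prop :=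
  exists m n : nat, (1 <= m)%nat /\ z = (Z.of_nat m ^ 2 - Z.of_nat n ^ 2)%Z.

Definition spec_enum (lam : Z -> Z) : Prop :=
  (forall i j : Z, (i < j)%Z -> (lam i < lam j)%Z) /\
  (forall i : Z, is_spec (lam i)) /\
  (forall z : Z, is_spec z -> exists i : Z, lam i = z) /\
  lam 0%Z = 0%Z.

(* The shift c = lambda_(k-1) + eps1 lies strictly inside the gap between two
   consecutive values of m^2 - n^2, so every denominator of L satisfies
   |m^2 - n^2 - c| >= d := min(eps1, lambda_k - lambda_(k-1) - eps1) > 0.
   Off the diagonal m = n, which the projection onto R removes, we moreover have
   m^2 + n^2 <= (m^2 - n^2)^2, hence m^2 + n^2 <= C (m^2 - n^2 - c)^2 with
   C = 2 + 2 c^2 / d^2.  Both the L^2 and the H^1 weights of the coefficients of x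
   are therefore bounded by constant multiples of alpha^2 + beta^2. *)

From Stdlib Require Import Reals ZArith Lia Lra Psatz.
Open Scope R_scope.

Lemma dsum_le_scal (f g : nat -> nat -> R) (K : R) (N : nat) :
  (forall m n, (1 <= m)%nat -> f m n <= K * g m n) ->
  dsum f N <= K * dsum g N.
Proof.
  intros Hfg. unfold dsum, sum_f.
  rewrite scal_sum. apply sum_Rle. intros x _.
  rewrite Rmult_comm, scal_sum. apply sum_Rle. intros y _. rewrite Rmult_comm.
  apply Hfg. lia.
Qed.

Lemma dsum_bounded_le (f g : nat -> nat -> R) (K : R) :
  0 <= K ->
  (forall m n, (1 <= m)%nat -> f m n <= K * g m n) ->
  (exists B, forall N, dsum g N <= B) ->
  exists B, forall N, dsum f N <= B.
Proof.
  intros HK Hfg [B HB]. exists (K * B). intros N.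
  apply Rle_trans with (K * dsum g N).
  - now apply dsum_le_scal.
  - now apply Rmult_le_compat_l.
Qed.

Lemma spec_enum_gap (lam : Z -> Z) (k z : Z) :
  spec_enum lam -> is_spec z -> (z <= lam (k - 1))%Z \/ (lam k <= z)%Z.
Proof.
  intros [Hmono [_ [Hsurj _]]] Hz.
  destruct (Hsurj z Hz) as [i <-].
  destruct (Z_lt_le_dec i k) as [Hik | Hki].
  - left. destruct (Z.eq_dec i (k - 1)) as [-> | Hne]; [lia|].
    apply Z.lt_le_incl, Hmono. lia.
  - right. destruct (Z.eq_dec i k) as [-> | Hne]; [lia|].
    apply Z.lt_le_incl, Hmono. lia.
Qed.

Lemma INR_sqr_diff_spec (m n : nat) : (1 <= m)%nat ->
  exists z, is_spec z /\ INR m ^ 2 - INR n ^ 2 = IZR z.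
Proof.
  intros Hm. exists (Z.of_nat m ^ 2 - Z.of_nat n ^ 2)%Z. split.
  - now exists m, n.
  - now rewrite minus_IZR, !INR_IZR_INZ, !pow_IZR.
Qed.

Lemma Rmin_gap_sqr_le (lo hi c x : R) :
  lo < c < hi -> x <= lo \/ hi <= x -> Rmin (c - lo) (hi - c) ^ 2 <= (x - c) ^ 2.
Proof.
  intros Hc Hx. pose proof (Rmin_l (c - lo) (hi - c)). pose proof (Rmin_r (c - lo) (hi - c)).
  assert (0 < Rmin (c - lo) (hi - c)) by (apply Rmin_glb_lt; lra).
  destruct Hx; nra.
Qed.

Lemma INR_sqr_add_le_sqr_sub_sqr (m n : nat) : m <> n ->
  INR m ^ 2 + INR n ^ 2 <= (INR m ^ 2 - INR n ^ 2) ^ 2.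
Proof.
  intros Hmn. pose proof (pos_INR m). pose proof (pos_INR n).
  assert (Hdist : 1 <= (INR m - INR n) ^ 2).
  { destruct (Nat.lt_gt_cases m n) as [[Hlt | Hlt] _]; auto;
      apply le_INR in Hlt; rewrite S_INR in Hlt; nra. }
  replace ((INR m ^ 2 - INR n ^ 2) ^ 2)
    with ((INR m - INR n) ^ 2 * (INR m + INR n) ^ 2) by ring.
  assert (INR m ^ 2 + INR n ^ 2 <= (INR m + INR n) ^ 2) by nra.
  pose proof (pow2_ge_0 (INR m + INR n)). nra.
Qed.

Lemma one_le_Rinv_mult_sqr (d D : R) : 0 < d -> d ^ 2 <= D ^ 2 -> 1 <= / d ^ 2 * D ^ 2.
Proof.
  intros Hd HdD. assert (Hd2 : 0 < d ^ 2) by nra.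
  rewrite <- (Rinv_l (d ^ 2)) by lra.
  apply Rmult_le_compat_l; [left; now apply Rinv_0_lt_compat | exact HdD].
Qed.

(* [(D + c)^2 <= 2 D^2 + 2 c^2], and [c^2 <= (c^2 / d^2) D^2] once [d^2 <= D^2]. *)
Lemma Rsqr_add_le_scal (D c d : R) :
  0 < d -> d ^ 2 <= D ^ 2 -> (D + c) ^ 2 <= (2 + 2 * (c ^ 2 / d ^ 2)) * D ^ 2.
Proof.
  intros Hd HdD.
  assert (Hc : c ^ 2 <= c ^ 2 / d ^ 2 * D ^ 2).
  { unfold Rdiv. rewrite Rmult_assoc, <- (Rmult_1_r (c ^ 2)) at 1.
    apply Rmult_le_compat_l; [nra|]. now apply one_le_Rinv_mult_sqr. }
  pose proof (pow2_ge_0 (D - c)). nra.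
Qed.

Lemma weighted_div_sqr_le (w K D a : R) :
  0 < D ^ 2 -> w <= K * D ^ 2 -> w * (a / D) ^ 2 <= K * a ^ 2.
Proof.
  intros HD Hw. assert (D <> 0) by (intros ->; lra).
  replace (w * (a / D) ^ 2) with (w * / D ^ 2 * a ^ 2) by (field; auto).
  apply Rmult_le_compat_r; [nra|].
  replace K with (K * D ^ 2 * / D ^ 2) by (field; auto).
  apply Rmult_le_compat_r; [left; now apply Rinv_0_lt_compat | exact Hw].
Qed.

Section ShiftInGap.

Variables (c d : R).
Hypothesis d_gt0 : 0 < d.
Hypothesis shift_gap :
  forall m n : nat, (1 <= m)%nat -> d ^ 2 <= (INR m ^ 2 - INR n ^ 2 - c) ^ 2.

Let C := 2 + 2 * (c ^ 2 / d ^ 2).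

Lemma C_ge0 : 0 <= C.
Proof.
  assert (0 < / d ^ 2) by (apply Rinv_0_lt_compat; nra).
  unfold C, Rdiv. nra.
Qed.

Lemma projR_Lcoef_sqr_le (a : coef) (m n : nat) : (1 <= m)%nat ->
  projR (Lcoef c a) m n ^ 2 <= / d ^ 2 * a m n ^ 2.
Proof.
  intros Hm. pose proof (shift_gap m n Hm).
  assert (0 <= / d ^ 2) by (apply Rlt_le, Rinv_0_lt_compat; nra).
  unfold projR, Lcoef. destruct (Nat.eqb m n); [nra|].
  rewrite <- (Rmult_1_l ((_ / _) ^ 2)).
  apply weighted_div_sqr_le; [nra|]. now apply one_le_Rinv_mult_sqr.
Qed.

Lemma projR_Lcoef_H1_weight_le (a : coef) (m n : nat) : (1 <= m)%nat ->
  (INR m ^ 2 + INR n ^ 2) * projR (Lcoef c a) m n ^ 2 <= C * a m n ^ 2.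
Proof.
  intros Hm. pose proof (shift_gap m n Hm). pose proof C_ge0.
  unfold projR, Lcoef. destruct (Nat.eqb_spec m n) as [_ | Hmn]; [nra|].
  apply weighted_div_sqr_le; [nra|].
  eapply Rle_trans; [now apply INR_sqr_add_le_sqr_sub_sqr|].
  pose proof (Rsqr_add_le_scal _ c d d_gt0 (shift_gap m n Hm)) as Hsq.
  now rewrite Rplus_comm, Rplus_minus in Hsq.
Qed.

Lemma projR_Lcoef_in_H1sp (a b : coef) :
  in_H a b -> in_H1sp (projR (Lcoef c a)) (projR (Lcoef c b)).
Proof.
  intros Hab. set (v2 := fun m n => a m n ^ 2 + b m n ^ 2).
  split; [split|].
  - apply (dsum_bounded_le _ v2 (/ d ^ 2)); [apply Rlt_le, Rinv_0_lt_compat; nra| |exact Hab].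
    intros m n Hm. unfold v2. rewrite Rmult_plus_distr_l.
    pose proof (projR_Lcoef_sqr_le a m n Hm). pose proof (projR_Lcoef_sqr_le b m n Hm). lra.
  - intros m _. unfold projR. now rewrite Nat.eqb_refl.
  - apply (dsum_bounded_le _ v2 C); [exact C_ge0| |exact Hab].
    intros m n Hm. unfold v2. rewrite !Rmult_plus_distr_l.
    pose proof (projR_Lcoef_H1_weight_le a m n Hm).
    pose proof (projR_Lcoef_H1_weight_le b m n Hm). lra.
Qed.

End ShiftInGap.

Theorem lemma1 (lam : Z -> Z) (Hlam : spec_enum lam)
  (k : Z) (hk : k <> 0%Z)
  (eps1 : R) (he0 : 0 < eps1) (he1 : eps1 < IZR (lam k) - IZR (lam (k - 1)%Z))
  (alpha beta : coef) (hv : in_H alpha beta) :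
  in_H1sp (projR (Lcoef (IZR (lam (k - 1)%Z) + eps1) alpha))
          (projR (Lcoef (IZR (lam (k - 1)%Z) + eps1) beta)).
Proof.
  set (lo := IZR (lam (k - 1)%Z)). set (hi := IZR (lam k)).
  apply (projR_Lcoef_in_H1sp _ (Rmin (lo + eps1 - lo) (hi - (lo + eps1))));
    [apply Rmin_glb_lt; unfold lo, hi in *; lra | | exact hv].
  intros m n Hm.
  destruct (INR_sqr_diff_spec m n Hm) as [z [Hz ->]].
  apply Rmin_gap_sqr_le; [unfold lo, hi in *; lra|].
  destruct (spec_enum_gap lam k z Hlam Hz); [left | right]; now apply IZR_le.
Qed.
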